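(* Let $d\ge2$, $j\in[d-1]$, $j\le k\le d$, and $R$ an abelian group with at least two elements. If in a simplicial complex $\mathcal G$ on $[n]$ the 4-tuple $(K,C,w,a)$ forms a copy of $\hat M_{j,k}$, then $H^j(\mathcal G;R)\neq0$.
   Context: $H^j(\mathcal G;R)$ is the $j$-th simplicial cohomology group with coefficients in $R$. A $(j+2)$-set is a $j$-shell in $\mathcal G$ if all its $(j+1)$-subsets are $j$-simplices ($i$-simplices being members of size $i+1$). For $j+1\le k\le d$, $(K,C,w,a)$ is a copy of $\hat M_{j,k}$ if $K$ is a $k$-simplex of $\mathcal G$; $C\subset K$ with $|C|=j$ such that every simplex of $\mathcal G$ containing some set $C\cup\{x\}$, $x\in K\setminus C$, is contained in $K$; $w\in K\setminus C$ and $a\in[n]\setminus K$ with $C\cup\{w,a\}$ a $j$-shell. For $k=j$: $(K,C,w,a)$ is a copy of $\hat M_{j,j}$ if $K$ is an isolated $j$-simplex (contained in no other simplex of $\mathcal G$), $a\in[n]\setminus K$ with $K\cup\{a\}$ a $j$-shell, $C$ is the set of first $j$ vertices of $K$ and $w$ the last vertex of $K$ in increasing order on $[n]$. *)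

From HB Require Import structures.
From mathcomp Require Import all_boot all_order all_algebra.
Set Implicit Arguments. Unset Strict Implicit. Unset Printing Implicit Defensive.
Import GRing.Theory.
Local Open Scope ring_scope.

Definition simplicial_complex (n : nat) (G : {set {set 'I_n}}) : Prop :=
  forall s t : {set 'I_n}, s \in G -> t \subset s -> t \in G.

Definition is_simplex (n : nat) (G : {set {set 'I_n}}) (i : nat) (s : {set 'I_n}) : Prop :=
  s \in G /\ #|s| = i.+1.

Definition is_shell (n : nat) (G : {set {set 'I_n}}) (j : nat) (S : {set 'I_n}) : Prop :=
  #|S| = j.+2 /\ forall T : {set 'I_n}, T \subset S -> #|T| = j.+1 -> T \in G.

(* Simplicial cochains with coefficients in R: functions on sets of vertices
   (only their values on simplices of the relevant dimension matter).
   Simplices are oriented by the increasing order of [n]; the sign of vertex x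
   in s is (-1)^(number of vertices of s smaller than x). *)
Definition sgn_at (R : zmodType) (b : nat) (v : R) : R := if odd b then - v else v.

Definition coboundary (R : zmodType) (n : nat) (f : {set 'I_n} -> R)
  (s : {set 'I_n}) : R :=
  \sum_(x in s) sgn_at #|[set y in s | (y < x)%N]| (f (s :\ x)).

Definition cocycle (R : zmodType) (n : nat) (G : {set {set 'I_n}}) (j : nat)
  (f : {set 'I_n} -> R) : Prop :=
  forall s, is_simplex G j.+1 s -> coboundary f s = 0.

Definition cobound (R : zmodType) (n : nat) (G : {set {set 'I_n}}) (j : nat)
  (f : {set 'I_n} -> R) : Prop :=
  exists g : {set 'I_n} -> R, forall s, is_simplex G j s -> f s = coboundary g s.

Definition cohom_nonzero (R : zmodType) (n : nat) (G : {set {set 'I_n}}) (j : nat) : Prop :=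
  exists f : {set 'I_n} -> R, cocycle G j f /\ ~ cobound G j f.

Definition copy_Mhat (n : nat) (G : {set {set 'I_n}}) (j k : nat)
  (K C : {set 'I_n}) (w a : 'I_n) : Prop :=
  if (j < k)%N then
    is_simplex G k K /\ C \subset K /\ #|C| = j /\
    (forall x, x \in K :\: C ->
       forall s, s \in G -> C :|: [set x] \subset s -> s \subset K) /\
    w \in K :\: C /\ a \notin K /\ is_shell G j (C :|: [set w; a])
  else if k == j then
    is_simplex G j K /\
    (forall s, s \in G -> K \subset s -> s = K) /\
    a \notin K /\ is_shell G j (K :|: [set a]) /\
    w \in K /\ (forall y, y \in K -> (y <= w)%N) /\ C = K :\ w
  else False.

From HB Require Import structures.
From mathcomp Require Import all_boot all_order all_algebra.
Set Implicit Arguments. Unset Strict Implicit. Unset Printing Implicit Defensive.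
Import GRing.Theory.

(* The nonzero class is carried by the elementary cochain of a free face: for
   k = j the indicator of the isolated simplex K, for k > j the coboundary of
   the indicator of C, cut off outside K.  It is a cocycle because every
   simplex through C and a further vertex of K lies in K, where the cut-off is
   invisible and delta delta = 0 applies.  On the j-shell with apex a outside K
   it is nonzero on exactly one facet, the one avoiding a; so its coboundary on
   the shell is nonzero, whereas that of a coboundary vanishes by
   delta delta = 0 again. *)

Local Open Scope ring_scope.

Section Sign.
Variable R : zmodType.

Lemma sgn_atS b (v : R) : sgn_at b.+1 v = - sgn_at b v.
Proof. by rewrite /sgn_at /=; case: (odd b); rewrite ?opprK. Qed.

Lemma sgn_atD b c (v : R) : sgn_at (b + c) v = sgn_at b (sgn_at c v).
Proof. by rewrite /sgn_at oddD; case: (odd b); case: (odd c); rewrite /= ?opprK. Qed.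

Lemma sgn_at_sum b I (r : seq I) (P : pred I) (F : I -> R) :
  sgn_at b (\sum_(i <- r | P i) F i) = \sum_(i <- r | P i) sgn_at b (F i).
Proof. by rewrite /sgn_at; case: (odd b); rewrite ?sumrN. Qed.

Lemma sgn_at_eq0 b (v : R) : (sgn_at b v == 0) = (v == 0).
Proof. by rewrite /sgn_at; case: (odd b); rewrite ?oppr_eq0. Qed.

Lemma sgn_at0 b : sgn_at b (0 : R) = 0.
Proof. by apply/eqP; rewrite sgn_at_eq0. Qed.

End Sign.

Section Coboundary.
Variables (R : zmodType) (n : nat).
Implicit Types (C K S T U s : {set 'I_n}) (G : {set {set 'I_n}}) (x y : 'I_n) (r : R).

Definition rank_in S x := #|[set y in S | (y < x)%N]|.

Lemma rank_in_setD1_gt S x y : (y < x)%N -> rank_in (S :\ x) y = rank_in S y.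
Proof.
move=> yx; apply: eq_card => z; rewrite !inE.
have [zy|] := ltnP z y; rewrite ?andbF ?andbT //.
by case: eqP zy => // -> /(ltn_trans yx); rewrite ltnn.
Qed.

Lemma rank_in_setD1_lt S x y : y \in S -> (y < x)%N ->
  rank_in S x = (rank_in (S :\ y) x).+1.
Proof.
move=> yS yx; rewrite /rank_in.
rewrite (_ : [set z in S | _] = y |: [set z in S :\ y | (z < x)%N]).
  by rewrite cardsU1 !inE eqxx.
by apply/setP => z; rewrite !inE; case: eqVneq => [->|]; rewrite ?yS ?yx.
Qed.

Lemma sum_antisym S (F : 'I_n -> 'I_n -> R) :
  (forall x y, x \in S -> y \in S -> (y < x)%N -> F y x = - F x y) ->
  \sum_(x in S) \sum_(y in S | y != x) F x y = 0.
Proof.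
move=> antiF.
(* R may have 2-torsion, so pair (x, y) with (y, x) rather than symmetrising. *)
pose B x y := if [&& x \in S, y \in S & (y < x)%N] then F x y else 0.
have splitF x y : x \in S -> y \in S -> y != x -> F x y = B x y - B y x.
  move=> xS yS; rewrite /B xS yS neq_ltn => /orP[yx|xy].
    by rewrite yx ltnNge ltnW //= subr0.
  by rewrite xy ltnNge ltnW //= sub0r antiF.
have -> : \sum_(x in S) \sum_(y in S | y != x) F x y = \sum_x \sum_y (B x y - B y x).
  rewrite big_mkcond; apply: eq_bigr => x _; case: ifP => xS; last first.
    by rewrite big1 // => y _; rewrite /B xS !andbF subrr.
  rewrite [RHS](bigID (fun y => (y \in S) && (y != x))) /=.
  rewrite [X in _ + X]big1 ?addr0 => [|y /nandP[yS|/negPn/eqP ->]].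
  - by apply: eq_bigr => y /andP[yS yx]; apply: splitF.
  - by rewrite /B (negbTE yS) !andbF subrr.
  - by rewrite subrr.
by rewrite (eq_bigr _ (fun x _ => sumrB _ _ _ _)) sumrB exchange_big subrr.
Qed.

Lemma coboundary_coboundary (g : {set 'I_n} -> R) S :
  coboundary (coboundary g) S = 0.
Proof.
pose F x y := sgn_at (rank_in S x + rank_in (S :\ x) y) (g (S :\ x :\ y)).
rewrite -[RHS](@sum_antisym S F) => [|x y xS yS yx]; last first.
  rewrite /F (rank_in_setD1_gt S yx) (rank_in_setD1_lt yS yx).
  by rewrite addSn sgn_atS opprK addnC !setDDl setUC.
apply: eq_bigr => x _; rewrite /coboundary sgn_at_sum.
rewrite (eq_bigl (fun y => (y \in S) && (y != x))) => [|y]; last first.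
  by rewrite !inE andbC.
by apply: eq_big => // y _; rewrite -sgn_atD.
Qed.

Lemma shell_not_cobound G j T a (f : {set 'I_n} -> R) :
  a \notin T -> is_shell G j (a |: T) -> f T != 0 ->
  (forall U, a \in U -> f U = 0) -> ~ cobound G j f.
Proof.
move=> aT [cardS faceS] fT0 f0 [g fg].
have facet_simplex x : x \in a |: T -> is_simplex G j ((a |: T) :\ x).
  move=> xS; have cardD : #|(a |: T) :\ x| = j.+1.
    by move: cardS; rewrite (cardsD1 x) xS => -[].
  by split=> //; apply: faceS => //; apply: subD1set.
have : coboundary f (a |: T) = coboundary (coboundary g) (a |: T).
  by apply: eq_bigr => x xS; rewrite fg //; apply: facet_simplex.
rewrite coboundary_coboundary /coboundary (bigD1 a) ?setU11 //= setU1K //.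
rewrite big1 ?addr0 => [/eqP|x /andP[_ xa]]; first by rewrite sgn_at_eq0 (negbTE fT0).
by rewrite f0 ?sgn_at0 // !inE eq_sym xa eqxx.
Qed.

Definition elem_cochain T r U : R := if U == T then r else 0.

Lemma coboundary_elem_eq0 T r s :
  (forall x, x \in s -> s :\ x != T) -> coboundary (elem_cochain T r) s = 0.
Proof.
by move=> sT; apply: big1 => x xs; rewrite /elem_cochain (negbTE (sT x xs)) sgn_at0.
Qed.

Lemma coboundary_elem_setU1_eq0 T r x : x \notin T ->
  (coboundary (elem_cochain T r) (x |: T) == 0) = (r == 0).
Proof.
move=> xT; rewrite /coboundary (bigD1 x) ?setU11 //= big1 ?addr0.
  by rewrite /elem_cochain setU1K // eqxx sgn_at_eq0.
move=> y /andP[_ yx]; rewrite /elem_cochain ifN ?sgn_at0 //.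
by apply: contraNneq xT => <-; rewrite !inE eq_sym yx eqxx.
Qed.

Definition restrict K (f : {set 'I_n} -> R) U : R :=
  if U \subset K then f U else 0.

Lemma restrict_coboundary_cocycle G j K C r :
  (forall x, x \in K :\: C ->
     forall s, s \in G -> C :|: [set x] \subset s -> s \subset K) ->
  cocycle G j (restrict K (coboundary (elem_cochain C r))).
Proof.
move=> linkC s [sG _]; have [sK|sNK] := boolP (s \subset K).
  rewrite -[RHS](coboundary_coboundary (elem_cochain C r) s).
  by apply: eq_bigr => x _; rewrite /restrict (subset_trans (subD1set s x) sK).
apply: big1 => x xs; rewrite /restrict; case: ifP => sxK; last by rewrite sgn_at0.
rewrite coboundary_elem_eq0 ?sgn_at0 // => y ys; apply: contraNneq sNK => defC.
have yK : y \in K := subsetP sxK y ys.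
apply: (linkC y) => //; first by rewrite -defC !inE eqxx yK.
rewrite -defC subUset sub1set (subset_trans (subD1set _ _) (subD1set _ _)).
by move: ys; rewrite inE => /andP[].
Qed.

Lemma isolated_elem_cocycle G j K r :
  (forall s, s \in G -> K \subset s -> s = K) -> cocycle G j (elem_cochain K r).
Proof.
move=> isoK s [sG _]; apply: coboundary_elem_eq0 => x xs.
apply/eqP => sxK; have sK : s = K by apply: isoK; rewrite // -sxK subD1set.
by move: xs sxK; rewrite sK => xK /setP/(_ x); rewrite !inE eqxx xK.
Qed.

End Coboundary.

Theorem corollary4p9 (d j k n : nat) (R : zmodType)
  (G : {set {set 'I_n}}) (K C : {set 'I_n}) (w a : 'I_n) :
  (2 <= d)%N -> (1 <= j)%N -> (j <= d - 1)%N -> (j <= k)%N -> (k <= d)%N ->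
  (exists x y : R, x <> y) ->
  simplicial_complex G ->
  copy_Mhat G j k K C w a ->
  cohom_nonzero R G j.
Proof.
move=> _ _ _ _ _ [x1 [x2 /eqP x12]] _; have r0 : x1 - x2 != 0 by rewrite subr_eq0.
rewrite /copy_Mhat; case: ifP => _; last case: ifP => // _.
- move=> [_ [CK [_ [linkC [/setDP[wK wC] [aK shell]]]]]].
  exists (restrict K (coboundary (elem_cochain C (x1 - x2)))).
  split; first exact: restrict_coboundary_cocycle.
  have aC : a \notin C by apply: contra aK; apply: (subsetP CK).
  apply: (@shell_not_cobound _ _ _ _ (w |: C) a).
  - by rewrite !inE negb_or aC andbT; apply: contraNneq aK => ->.
  - suff -> : a |: (w |: C) = C :|: [set w; a] by [].
    by apply/setP => z; rewrite !inE; case: (z == a); case: (z == w); case: (z \in C).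
  - by rewrite /restrict subUset sub1set wK CK coboundary_elem_setU1_eq0.
  - by move=> U aU; rewrite /restrict ifN //; apply: contra aK => /subsetP; apply.
- move=> [_ [isoK [aK [shell _]]]].
  exists (elem_cochain K (x1 - x2)); split; first exact: isolated_elem_cocycle.
  apply: (shell_not_cobound aK); first by rewrite setUC.
    by rewrite /elem_cochain eqxx.
  by move=> U aU; rewrite /elem_cochain ifN //; apply: contraNneq aK => <-.
Qed.
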